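(* Let $q=2^m$ and let $e$ be an integer with $1\le e<m$. Then every $e$-Klenian polynomial $f\in\mathbb F_q[X,Y]$ has a companion.
   Context: $q$ is a prime power and $\mathbb F_q=\{c_0,\dots,c_{q-1}\}$ is a fixed enumeration; $\mathfrak S_q$ is the symmetric group of permutations of $\mathbb F_q$, composed right to left, written in cycle notation. Every function $\mathbb F_q^2\to\mathbb F_q$ is identified with the unique polynomial in $\mathbb F_q[X,Y]$ of degree $<q$ in each variable representing it. $f\in\mathbb F_q[X,Y]$ is a local permutation polynomial (LPP) if $x\mapsto f(x,y_0)$ and $y\mapsto f(x_0,y)$ are permutations of $\mathbb F_q$ for all $x_0,y_0$. A permutation polynomial tuple is $(\beta_0,\dots,\beta_{q-1})\in\mathfrak S_q^q$ such that $\beta_i^{-1}\beta_j$ has no fixed point whenever $i\ne j$; LPPs $f$ correspond bijectively to such tuples via $f(x,\beta_i(x))=c_i$ for all $x$ and all $i$. Two LPPs $f,g$ are orthogonal (companions) if for every $(a,b)\in\mathbb F_q^2$ the system $f(X,Y)=a$, $g(X,Y)=b$ has exactly one solution in $\mathbb F_q^2$; a companion of $f$ is an LPP orthogonal to $f$. $e$-Klenian polynomials: for $q=p^r$, $0\le e<r$, $\ell=p^e$, $t=q/\ell$, let $\alpha=\prod_{i=0}^{t-1}(c_{i\ell},c_{i\ell+1},\dots,c_{(i+1)\ell-1})$, $\beta=\prod_{j=0}^{\ell-1}(c_j,c_{j+\ell},\dots,c_{j+(t-1)\ell})$ and $G=\{\alpha^i\beta^j:0\le i\le \ell-1,0\le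 j\le t-1\}$ (a subgroup of $\mathfrak S_q$ of order $q$ whose non-identity elements have no fixed points); an $e$-Klenian polynomial is an LPP whose permutation polynomial tuple consists of the $q$ elements of $G$ in some order. *)

From mathcomp Require Import all_boot all_order all_algebra all_field.
Set Implicit Arguments. Unset Strict Implicit. Unset Printing Implicit Defensive.

(* Functions F^2 -> F are identified with reduced polynomials in F[X,Y];
   we work with the functions directly. *)

Definition is_LPP (F : finType) (f : F -> F -> F) : Prop :=
  (forall y : F, bijective (fun x => f x y)) /\ (forall x : F, bijective (f x)).

Definition orthogonal_LPP (F : finType) (f g : F -> F -> F) : Prop :=
  forall a b : F, exists! p : F * F, f p.1 p.2 = a /\ g p.1 p.2 = b.

(* A fixed enumeration c_0, ..., c_{q-1} of F, given as a duplicate-free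
   sequence containing every element; c_k = nth _ cs k. *)
Definition is_enum (F : finType) (cs : seq F) : Prop :=
  uniq cs /\ forall x : F, x \in cs.

(* On indices: alpha = prod_i (iL, iL+1, ..., (i+1)L-1) maps
   k = iL + r to iL + ((r+1) mod L). *)
Definition alpha_idx (L k : nat) : nat := (k %/ L) * L + (k %% L).+1 %% L.
(* beta = prod_j (j, j+L, ..., j+(t-1)L) with q = tL maps k to (k+L) mod q. *)
Definition beta_idx (L q k : nat) : nat := (k + L) %% q.

Definition alphaF (F : finType) (cs : seq F) (L : nat) (x : F) : F :=
  nth x cs (alpha_idx L (index x cs)).
Definition betaF (F : finType) (cs : seq F) (L : nat) (x : F) : F :=
  nth x cs (beta_idx L (size cs) (index x cs)).

Definition Gelt (F : finType) (cs : seq F) (L i j : nat) (x : F) : F :=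
  iter i (alphaF cs L) (iter j (betaF cs L) x).

(* f is e-Klenian (q = p^r, L = p^e, t = q/L) w.r.t. the enumeration cs:
   f is an LPP whose permutation polynomial tuple (b_0,...,b_{q-1}),
   defined by f(x, b_i(x)) = c_i, consists of the q elements of
   G = {alpha^i beta^j : i < L, j < t} in some order. *)
Definition klenian (F : finType) (p e : nat) (cs : seq F) (f : F -> F -> F)
  : Prop :=
  is_LPP f /\
  exists b : 'I_#|F| -> F -> F,
    (forall (k : 'I_#|F|) (x : F), f x (b k x) = nth x cs k) /\
    (forall k : 'I_#|F|, exists i j, [/\ i < p ^ e, j < #|F| %/ p ^ e &
                                forall x, b k x = Gelt cs (p ^ e) i j x]) /\
    (forall k1 k2 : 'I_#|F|, (forall x, b k1 x = b k2 x) -> k1 = k2) /\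
    (forall i j, i < p ^ e -> j < #|F| %/ p ^ e ->
       exists k : 'I_#|F|, forall x, b k x = Gelt cs (p ^ e) i j x).

(* Through the mixed-radix encoding c_k |-> (k / L, k mod L), with L = 2^e and
   t = 2^(m-e), the group G becomes the translation group of Z_t x Z_L, so a
   Klenian f(x, y) depends only on the difference y - x.  If theta is an
   orthomorphism of Z_t x Z_L (theta and d |-> d + theta d both bijective), then
   g(x, y) = y + theta(y - x) is an LPP orthogonal to f.  Orthomorphisms exist
   because both factors are even: Z_2 x Z_2c has an explicit one, factors may be
   swapped, and one of Z_u x Z_v lifts to Z_2u x Z_2v by acting with it on
   halves and with (a, b) |-> (b, a + b) on parities; the carry from the parities
   into the halves depends on the parities alone, so it cancels. *)

From mathcomp Require Import all_boot all_order all_algebra all_field.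
From mathcomp Require Import zify.
Set Implicit Arguments. Unset Strict Implicit.

(* Z_u x Z_v as the pairs of naturals in the box [0, u) x [0, v); subtraction is
   x + (u - y) so that truncated subtraction never fires. *)
Definition in_box u v (x : nat * nat) := (x.1 < u) && (x.2 < v).
Definition addbox u v (x y : nat * nat) := ((x.1 + y.1) %% u, (x.2 + y.2) %% v).
Definition subbox u v (x y : nat * nat) :=
  ((x.1 + (u - y.1)) %% u, (x.2 + (v - y.2)) %% v).

Lemma addn_mod_injr n c a a' :
  a < n -> a' < n -> (a + c) %% n = (a' + c) %% n -> a = a'.
Proof. by move=> ha ha' /eqP; rewrite eqn_modDr !modn_small // => /eqP. Qed.

Section BoxGroup.
Variables u v : nat.
Hypotheses (u_gt0 : 0 < u) (v_gt0 : 0 < v).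

Lemma in_box_add x y : in_box u v (addbox u v x y).
Proof. by rewrite /in_box /= !ltn_pmod. Qed.

Lemma in_box_sub x y : in_box u v (subbox u v x y).
Proof. by rewrite /in_box /= !ltn_pmod. Qed.

Lemma addboxA x y z : addbox u v (addbox u v x y) z = addbox u v x (addbox u v y z).
Proof. by rewrite /addbox /= !modnDml !modnDmr !addnA. Qed.

Lemma addboxC x y : addbox u v x y = addbox u v y x.
Proof. by rewrite /addbox addnC [x.2 + _]addnC. Qed.

Lemma addbox_injr z x y :
  in_box u v x -> in_box u v y -> addbox u v x z = addbox u v y z -> x = y.
Proof.
case: x y => a b [a' b'] /andP[/= ha hb] /andP[/= ha' hb'] [E1 E2].
by rewrite (addn_mod_injr ha ha' E1) (addn_mod_injr hb hb' E2).
Qed.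

Lemma addbox_injl z x y :
  in_box u v x -> in_box u v y -> addbox u v z x = addbox u v z y -> x = y.
Proof. by rewrite !(addboxC z); apply: addbox_injr. Qed.

Lemma addbox_subK x y : in_box u v x -> in_box u v y -> addbox u v y (subbox u v x y) = x.
Proof.
case: x y => a b [c d] /andP[/= ha hb] /andP[/= hc hd].
rewrite /addbox /subbox /= !modnDmr.
have -> : c + (a + (u - c)) = a + u by lia.
have -> : d + (b + (v - d)) = b + v by lia.
by rewrite !modnDr !modn_small.
Qed.

Lemma subbox_addK x y : in_box u v x -> in_box u v y -> subbox u v (addbox u v y x) y = x.
Proof.
move=> hx hy; apply: (@addbox_injl y) => //; first exact: in_box_sub.
by rewrite addbox_subK //; apply: in_box_add.
Qed.
End BoxGroup.

Definition box_injective u v (f : nat * nat -> nat * nat) :=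
  forall x y, in_box u v x -> in_box u v y -> f x = f y -> x = y.

Definition orthomorphism u v (th : nat * nat -> nat * nat) :=
  [/\ forall x, in_box u v x -> in_box u v (th x),
      box_injective u v th &
      box_injective u v (fun x => addbox u v x (th x))].

Lemma modn_lt_double x n :
  0 < n -> x < n + n -> x %% n = if x < n then x else x - n.
Proof.
move=> n_gt0 lt_x; case: ifP => lt_xn; first by rewrite modn_small.
have -> : x = (x - n) + n by lia.
by rewrite modnDr modn_small; lia.
Qed.

Definition orthomorphism_base c (x : nat * nat) : nat * nat :=
  if x.1 == 0 then (if x.2 < c then (0, x.2) else (1, x.2 - c))
  else if x.2 + 2 <= c then (0, x.2 + c + 1)
  else if x.2 + 1 < c + c then (1, x.2 + 1) else (0, c).

Lemma orthomorphism_baseP c : 0 < c -> orthomorphism 2 (c + c) (orthomorphism_base c).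
Proof.
move=> c_gt0; have cc_gt0 : 0 < c + c by lia.
split.
- case=> a r /andP[/= ha hr]; rewrite /in_box /orthomorphism_base.
  by repeat case: ifP => ? /=; lia.
- case=> a r [a' r'] /andP[/= ha hr] /andP[/= ha' hr'].
  rewrite /orthomorphism_base /=.
  by repeat case: ifP => ? /=; move/pair_equal_spec=> [? ?]; apply/pair_equal_spec; split; lia.
- case=> a r [a' r'] /andP[/= ha hr] /andP[/= ha' hr'].
  rewrite /addbox /orthomorphism_base /=.
  repeat case: ifP => ? /=; move/pair_equal_spec=> []; rewrite ?(@modn_lt_double _ (c + c)) //;
    try lia; repeat case: ifP => ?; move=> *; apply/pair_equal_spec; split; lia.
Qed.

Definition swap_orthomorphism (th : nat * nat -> nat * nat) (x : nat * nat) :=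
  let y := th (x.2, x.1) in (y.2, y.1).

Lemma orthomorphism_swap u v th :
  orthomorphism u v th -> orthomorphism v u (swap_orthomorphism th).
Proof.
have in_box_swap w w' x : in_box w w' (x.2, x.1) = in_box w' w x.
  by rewrite /in_box andbC.
have swap_inj w w' f : box_injective w w' f ->
    box_injective w' w (fun x => ((f (x.2, x.1)).2, (f (x.2, x.1)).1)).
  move=> f_inj x y hx hy /pair_equal_spec[E2 E1].
  have /pair_equal_spec[] : (x.2, x.1) = (y.2, y.1).
    by apply: f_inj; rewrite ?in_box_swap //; apply: injective_projections.
  by case: x y {hx hy E1 E2} => ? ? [? ?] /= -> ->.
move=> [th_box th_inj thD_inj]; split.
- move=> x hx; rewrite /swap_orthomorphism -in_box_swap /= -surjective_pairing.
  by apply: th_box; rewrite in_box_swap.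
- exact: swap_inj.
- exact: swap_inj thD_inj.
Qed.

Definition parity (x : nat * nat) := (x.1 %% 2, x.2 %% 2).
Definition halve (x : nat * nat) := (x.1 %/ 2, x.2 %/ 2).
Definition add_double (q n : nat * nat) := (q.1 + 2 * n.1, q.2 + 2 * n.2).
Definition carry (q q' : nat * nat) := ((q.1 + q'.1) %/ 2, (q.2 + q'.2) %/ 2).

Lemma add_double_parity_halve x : add_double (parity x) (halve x) = x.
Proof. by case: x => a r; rewrite /add_double /=; apply/pair_equal_spec; split; lia. Qed.

Lemma parity_add_double q n : in_box 2 2 q -> parity (add_double q n) = q.
Proof. by case: q => a r /andP[/= ha hr]; apply/pair_equal_spec; split=> /=; lia. Qed.

Lemma halve_add_double q n : in_box 2 2 q -> halve (add_double q n) = n.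
Proof.
by case: q n => a r [b s] /andP[/= ha hr]; apply/pair_equal_spec; split=> /=; lia.
Qed.

Lemma in_box_parity x : in_box 2 2 (parity x).
Proof. by rewrite /in_box /= !ltn_pmod. Qed.

Lemma in_box_halve u v x : in_box (2 * u) (2 * v) x -> in_box u v (halve x).
Proof. by case: x => a r /andP[/= ha hr]; rewrite /in_box /=; lia. Qed.

Lemma in_box_add_double u v q n :
  in_box 2 2 q -> in_box u v n -> in_box (2 * u) (2 * v) (add_double q n).
Proof. by case: q n => a r [b s] /andP[/= ? ?] /andP[/= ? ?]; rewrite /in_box /=; lia. Qed.

Lemma modn_double_mod2 X w : X %% (2 * w) %% 2 = X %% 2.
Proof. by rewrite modn_dvdm // dvdn_mulr. Qed.

Lemma modn_double_half X Y w :
  (X + Y) %% (2 * w) %/ 2 = ((X %/ 2 + Y %/ 2) %% w + (X %% 2 + Y %% 2) %/ 2) %% w.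
Proof.
rewrite mulnC -modn_divl modnDml.
by congr (_ %% w); lia.
Qed.

Lemma parity_addbox u v x y :
  parity (addbox (2 * u) (2 * v) x y) = addbox 2 2 (parity x) (parity y).
Proof. by rewrite /parity /addbox /= !modn_double_mod2 !modnDm. Qed.

Lemma halve_addbox u v x y :
  halve (addbox (2 * u) (2 * v) x y) =
  addbox u v (addbox u v (halve x) (halve y)) (carry (parity x) (parity y)).
Proof. by rewrite /halve /addbox /= !modn_double_half. Qed.

Definition orthomorphism_Z2xZ2 (q : nat * nat) := (q.2, (q.1 + q.2) %% 2).

Lemma orthomorphism_Z2xZ2P : orthomorphism 2 2 orthomorphism_Z2xZ2.
Proof.
have box22 x : in_box 2 2 x -> x \in [:: (0, 0); (0, 1); (1, 0); (1, 1)].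
  by case: x => -[|[|a]] [|[|r]] /andP[/= ha hr].
split.
- by move=> x /box22; rewrite !inE => /or4P[] /eqP->.
- by move=> x y /box22 + /box22; rewrite !inE => /or4P[] /eqP-> /or4P[] /eqP->.
- by move=> x y /box22 + /box22; rewrite !inE => /or4P[] /eqP-> /or4P[] /eqP->.
Qed.

Definition double_orthomorphism th x :=
  add_double (orthomorphism_Z2xZ2 (parity x)) (th (halve x)).

Lemma orthomorphism_double u v th : 0 < u -> 0 < v ->
  orthomorphism u v th -> orthomorphism (2 * u) (2 * v) (double_orthomorphism th).
Proof.
move=> u_gt0 v_gt0 [th_box th_inj thD_inj].
have [Q_box Q_inj QD_inj] := orthomorphism_Z2xZ2P.
have Qpar_box x : in_box 2 2 (orthomorphism_Z2xZ2 (parity x)).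
  exact/Q_box/in_box_parity.
have parity_th x : parity (double_orthomorphism th x) = orthomorphism_Z2xZ2 (parity x).
  exact: parity_add_double.
have halve_th x : halve (double_orthomorphism th x) = th (halve x).
  exact: halve_add_double.
have eq_parity_halve x y : parity x = parity y -> halve x = halve y -> x = y.
  by move=> Ep Eh; rewrite -(add_double_parity_halve x) Ep Eh add_double_parity_halve.
split.
- move=> x /in_box_halve hx.
  exact/in_box_add_double/th_box.
- move=> x y /in_box_halve hx /in_box_halve hy E; apply: eq_parity_halve.
  + by apply: Q_inj; rewrite ?in_box_parity // -!parity_th E.
  + by apply: th_inj; rewrite // -!halve_th E.
- move=> x y /in_box_halve hx /in_box_halve hy E.
  have Ep : parity x = parity y.
    by apply: QD_inj; rewrite ?in_box_parity // -!parity_th -!(parity_addbox u v) E.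
  apply: eq_parity_halve => //; apply: thD_inj => //.
  have := congr1 halve E; rewrite !halve_addbox !parity_th !halve_th Ep.
  by apply: addbox_injr; apply: in_box_add.
Qed.

Lemma orthomorphism_pow2 i j : exists th, orthomorphism (2 ^ i.+1) (2 ^ j.+1) th.
Proof.
have base k : orthomorphism 2 (2 ^ k.+1) (orthomorphism_base (2 ^ k)).
  by rewrite expnS mul2n -addnn; apply/orthomorphism_baseP/expn_gt0.
elim: i j => [|i IH] [|j]; first by exists (orthomorphism_base 1); apply: base.
- by exists (orthomorphism_base (2 ^ j.+1)); apply: base.
- by exists (swap_orthomorphism (orthomorphism_base (2 ^ i.+1))); apply/orthomorphism_swap/base.
have [th Hth] := IH j; exists (double_orthomorphism th).
by rewrite (expnS 2 i.+1) (expnS 2 j.+1); apply: orthomorphism_double; rewrite ?expn_gt0.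
Qed.

Lemma size_uniq_full (F : finType) (cs : seq F) :
  uniq cs -> (forall x, x \in cs) -> size cs = #|F|.
Proof.
move=> cs_uniq cs_all; rewrite -(card_uniqP cs_uniq) cardT.
by apply: eq_cardT => x; rewrite cs_all.
Qed.

Section Encoding.
Variables (F : finType) (cs : seq F) (t L : nat).
Hypotheses (cs_uniq : uniq cs) (cs_all : forall x, x \in cs) (t_gt0 : 0 < t) (L_gt0 : 0 < L)
  (card_F : #|F| = t * L).

Definition enc (x : F) := (index x cs %/ L, index x cs %% L).
Definition dec (x0 : F) (z : nat * nat) := nth x0 cs (z.1 * L + z.2).

Let size_cs : size cs = t * L.
Proof. by rewrite size_uniq_full. Qed.

Let index_lt x : index x cs < t * L.
Proof. by rewrite -size_cs index_mem cs_all. Qed.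

Let index_nth x0 n : n < t * L -> index (nth x0 cs n) cs = n.
Proof. by move=> n_lt; apply: index_uniq; rewrite ?size_cs. Qed.

Let mixed_radix_lt a r : a < t -> r < L -> a * L + r < t * L.
Proof. by move=> a_lt r_lt; nia. Qed.

Let divnMDl_small a r : r < L -> (a * L + r) %/ L = a.
Proof. by move=> r_lt; rewrite divnMDl // divn_small ?addn0. Qed.

Let modnMDl_small a r : r < L -> (a * L + r) %% L = r.
Proof. by move=> r_lt; rewrite modnMDl modn_small. Qed.

Lemma in_box_enc x : in_box t L (enc x).
Proof. by rewrite /in_box /enc /= ltn_divLR // index_lt ltn_pmod. Qed.

Lemma dec_enc x0 : cancel enc (dec x0).
Proof. by move=> x; rewrite /dec /enc /= -divn_eq nth_index ?cs_all. Qed.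

Lemma enc_dec x0 z : in_box t L z -> enc (dec x0 z) = z.
Proof.
case: z => a r /andP[/= a_lt r_lt]; rewrite /enc /dec /= index_nth ?mixed_radix_lt //.
by rewrite divnMDl_small // modnMDl_small.
Qed.

Lemma index_betaF x : index (betaF cs L x) cs = (index x cs + L) %% (t * L).
Proof. by rewrite /betaF /beta_idx size_cs index_nth ?ltn_pmod ?muln_gt0 ?t_gt0. Qed.

Lemma index_alphaF x : index (alphaF cs L x) cs = alpha_idx L (index x cs).
Proof.
rewrite /alphaF index_nth // /alpha_idx.
by apply: mixed_radix_lt; rewrite ?ltn_pmod // ltn_divLR.
Qed.

Lemma index_iter_beta j x :
  index (iter j (betaF cs L) x) cs = (index x cs + j * L) %% (t * L).
Proof.
elim: j => [|j IH] /=; first by rewrite addn0 modn_small.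
by rewrite index_betaF IH modnDml mulSnr addnA.
Qed.

Lemma index_iter_alpha i x : index (iter i (alphaF cs L) x) cs =
  index x cs %/ L * L + (index x cs %% L + i) %% L.
Proof.
elim: i => [|i IH] /=; first by rewrite addn0 modn_mod -divn_eq.
rewrite index_alphaF /alpha_idx IH divnMDl_small ?modnMDl_small ?ltn_pmod //.
by rewrite -addn1 modnDml -addnA addn1.
Qed.

Lemma enc_Gelt i j x : enc (Gelt cs L i j x) = addbox t L (enc x) (j, i).
Proof.
rewrite /enc /Gelt /addbox index_iter_alpha index_iter_beta /=.
rewrite divnMDl_small ?modnMDl_small ?ltn_pmod //.
rewrite -modn_divl divnDMl // -modnDml (modn_dvdm _ (dvdn_mull t (dvdnn L))).
by rewrite [index x cs + _]addnC modnMDl.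
Qed.
End Encoding.

Lemma orthogonal_LPP_inj (F : finType) (f g : F -> F -> F) :
  injective (fun p : F * F => (f p.1 p.2, g p.1 p.2)) -> orthogonal_LPP f g.
Proof.
move=> fg_inj a b; have [fg_inv fgK fg_invK] := injF_bij fg_inj.
exists (fg_inv (a, b)); split; first by have [] := fg_invK (a, b).
by move=> p [<- <-]; apply: fg_inj; rewrite fg_invK.
Qed.

Section Companion.
Variables (F : finType) (u v : nat) (enc : F -> nat * nat) (dec : nat * nat -> F)
  (th : nat * nat -> nat * nat).
Hypotheses (u_gt0 : 0 < u) (v_gt0 : 0 < v)
  (in_box_enc : forall x, in_box u v (enc x)) (encK : cancel enc dec)
  (decK : forall z, in_box u v z -> enc (dec z) = z) (th_ortho : orthomorphism u v th).

Definition difference x y := subbox u v (enc y) (enc x).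
Definition companion x y := dec (addbox u v (enc y) (th (difference x y))).

Let enc_inj := can_inj encK.

Let in_box_difference x y : in_box u v (difference x y).
Proof. exact: in_box_sub. Qed.

Let enc_companion x y : enc (companion x y) = addbox u v (enc y) (th (difference x y)).
Proof. by rewrite decK // in_box_add. Qed.

Let addbox_difference x y : addbox u v (enc x) (difference x y) = enc y.
Proof. exact: addbox_subK. Qed.

Let enc_eq_difference x x' y y' :
  difference x y = difference x' y' -> enc y = enc y' -> x = x'.
Proof.
move=> Ed Ey; apply/enc_inj/(@addbox_injr u v (difference x y)) => //.
by rewrite addbox_difference Ed addbox_difference.
Qed.

Lemma companion_LPP : is_LPP companion.
Proof.
have [th_box th_inj thD_inj] := th_ortho.
split=> [y | x]; apply: injF_bij.
- move=> x x' /(congr1 enc); rewrite !enc_companion => /addbox_injl E.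
  by apply: (enc_eq_difference (y := y) (y' := y)) => //; apply: th_inj => //;
    apply: E; apply: th_box.
- move=> y y' /(congr1 enc); rewrite !enc_companion -{1}(addbox_difference x y).
  rewrite -{1}(addbox_difference x y') !addboxA => /addbox_injl E.
  apply: enc_inj; rewrite -(addbox_difference x y) -(addbox_difference x y').
  by rewrite (thD_inj _ _ _ _ (E (in_box_add u_gt0 v_gt0 _ _) (in_box_add u_gt0 v_gt0 _ _))).
Qed.

Lemma companion_orthogonal f :
  (forall x y x' y', f x y = f x' y' -> difference x y = difference x' y') ->
  orthogonal_LPP f companion.
Proof.
move=> f_difference; apply: orthogonal_LPP_inj => -[x y] [x' y'] /=.
move=> /pair_equal_spec[/f_difference Ed]; move/(congr1 enc); rewrite !enc_companion Ed.
move=> /addbox_injr Ey; have {}Ey : enc y = enc y' by apply: Ey.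
by rewrite (enc_eq_difference Ed Ey) (enc_inj Ey).
Qed.
End Companion.

Lemma klenian_difference (F : finType) p e (cs : seq F) t f :
  is_enum cs -> 0 < t -> 0 < p ^ e -> #|F| = t * p ^ e -> klenian p e cs f ->
  forall x y x' y', f x y = f x' y' ->
  difference t (p ^ e) (enc cs (p ^ e)) x y = difference t (p ^ e) (enc cs (p ^ e)) x' y'.
Proof.
move=> [cs_uniq cs_all] t_gt0 L_gt0 card_F [[_ f_row] [b [f_b [b_G _]]]] x y x' y' Ef.
have k_lt : index (f x y) cs < #|F| by rewrite -(size_uniq_full cs_uniq cs_all) index_mem.
pose k := Ordinal k_lt.
have f_bk z : f z (b k z) = f x y by rewrite f_b nth_index.
have -> : y = b k x by apply: (bij_inj (f_row x)); rewrite f_bk.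
have -> : y' = b k x' by apply: (bij_inj (f_row x')); rewrite f_bk Ef.
have [i [j [i_lt j_lt b_Gelt]]] := b_G k.
have ji_box : in_box t (p ^ e) (j, i).
  by rewrite /in_box /= i_lt -(mulnK t L_gt0) -card_F j_lt.
have enc_box := in_box_enc cs_uniq cs_all L_gt0 card_F.
by rewrite /difference !b_Gelt !(enc_Gelt cs_uniq cs_all t_gt0 L_gt0 card_F) !subbox_addK.
Qed.

Theorem theorem4p6 (F : finFieldType) (m e : nat) (cs : seq F) :
  #|F| = 2 ^ m -> 1 <= e < m -> is_enum cs ->
  forall f : F -> F -> F, klenian 2 e cs f ->
  exists g : F -> F -> F, is_LPP g /\ orthogonal_LPP f g.
Proof.
move=> card_F /andP[e_gt0 e_lt_m] cs_enum f f_klenian.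
set L := 2 ^ e; set t := 2 ^ (m - e).
have t_gt0 : 0 < t by rewrite expn_gt0.
have L_gt0 : 0 < L by rewrite expn_gt0.
have card_tL : #|F| = t * L by rewrite card_F -expnD subnK // ltnW.
have [th th_ortho] : exists th, orthomorphism t L th.
  by have := orthomorphism_pow2 (m - e).-1 e.-1; rewrite !prednK ?subn_gt0.
have [cs_uniq cs_all] := cs_enum.
have enc_box := in_box_enc cs_uniq cs_all L_gt0 card_tL.
have encK := dec_enc L cs_all 0%R.
have decK := enc_dec cs_uniq cs_all t_gt0 L_gt0 card_tL 0%R.
exists (companion t L (enc cs L) (dec cs L 0%R) th); split.
  exact: companion_LPP.
apply: companion_orthogonal => //.
exact: klenian_difference cs_enum t_gt0 L_gt0 card_tL f_klenian.
Qed.
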